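(* Let $A$ be an $n\times n$ right stochastic matrix with Dobrushin coefficient $\sigma(A)>0$, and let $\{A_k\}_{k\in\mathbb{N}}$ be a sequence of $n\times n$ right stochastic matrices. Let $\mu^*$ be the unique probability vector with $\mu^*=\mu^*A$. For every $\epsilon\in(0,1)$, if \[ \sup_{k\in\mathbb{N}}\|A_k-A\|_\infty\le\frac{\sigma(A)\,\epsilon}{2n}, \] then for every probability (row) vector $\mu_0$ of dimension $n$, \[ \limsup_{k\to\infty}\|\mu_0A_0A_1\cdots A_k-\mu^*\|_1\le\epsilon . \]
   Context: The Dobrushin coefficient of an $n\times n$ right stochastic matrix $A$ is $\sigma(A)=\min_{i,k\in\{1,\dots,n\}}\sum_{j=1}^n\min\{A(i,j),A(k,j)\}\in[0,1]$. $\|M\|_\infty$ denotes the maximum absolute entry (or the induced max-row-sum norm) of a matrix; probability vectors are row vectors and $\|\cdot\|_1$ is the $\ell^1$ norm. *)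

From HB Require Import structures.
From mathcomp Require Import all_boot all_order all_algebra.
Set Implicit Arguments. Unset Strict Implicit. Unset Printing Implicit Defensive.
Import Order.TTheory GRing.Theory Num.Theory.
Local Open Scope ring_scope.

Definition stochastic (R : numDomainType) (n : nat) (A : 'M[R]_n) : Prop :=
  (forall i j, 0 <= A i j) /\ (forall i, \sum_(j < n) A i j = 1).

Definition prob_vec (R : numDomainType) (n : nat) (v : 'rV[R]_n) : Prop :=
  (forall j, 0 <= v 0 j) /\ \sum_(j < n) v 0 j = 1.

Definition norm1 (R : numDomainType) (n : nat) (v : 'rV[R]_n) : R :=
  \sum_(j < n) `|v 0 j|.

(* Dobrushin coefficient sigma(A) = min_{i,k} sum_j min(A i j, A k j).
   (The neutral element 1 of the iterated min is harmless: for stochastic A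
   every inner sum is <= 1.) *)
Definition dobrushin (R : realDomainType) (n : nat) (A : 'M[R]_n) : R :=
  \big[Num.min/1]_(i < n) \big[Num.min/1]_(k < n)
     \sum_(j < n) Num.min (A i j) (A k j).

Fixpoint traj (R : ringType) (n : nat) (mu0 : 'rV[R]_n) (As : nat -> 'M[R]_n)
    (k : nat) : 'rV[R]_n :=
  match k with
  | 0 => mu0 *m As 0%N
  | k'.+1 => traj mu0 As k' *m As k
  end.

From HB Require Import structures.
From mathcomp Require Import all_boot all_order all_algebra.
From mathcomp Require Import ring lra.
Import Order.TTheory GRing.Theory Num.Theory.
Local Open Scope ring_scope.

(* Write sigma = dobrushin A and e_k = ||mu0 A_0 ... A_k - mu_star||_1.
   1. Dobrushin contraction: for a zero-sum row vector v,
      ||v A||_1 <= (1 - sigma) ||v||_1.  We split v = p - q into positive and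
      negative parts (equal masses s) and couple them: s (vA)_j is the double
      sum of p_i q_k (A_ij - A_kj), while two rows of A differ in l^1 by at
      most 2 (1 - sigma).
   2. Perturbation: a probability vector times a matrix whose entries are at
      most c/n has l^1 norm at most c.
   3. Since mu_star = mu_star A, the error vector at step k+1 is
      (traj_k - mu_star) A + traj_k (A_(k+1) - A), so by 1 and 2
      e_(k+1) <= (1 - sigma) e_k + sigma eps / 2.
   4. This affine recursion gives e_k <= (1 - sigma)^k (e_0 - eps / 2) + eps / 2
      with e_0 <= 2, and (1 - sigma)^k tends to 0 (Bernoulli's inequality plus the
      archimedean property), whence the limsup bound. *)

Section Dobrushin.
Context {R : realFieldType} {n : nat}.
Implicit Types (A D : 'M[R]_n) (u v w mu : 'rV[R]_n).

Lemma dobrushin_le_overlap A i k :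
  dobrushin A <= \sum_(j < n) Num.min (A i j) (A k j).
Proof. exact: le_trans (bigmin_le _ i _) (bigmin_le _ _ _). Qed.

Lemma dobrushin_le1 A : dobrushin A <= 1.
Proof. exact: bigmin_le_id. Qed.

Lemma dist_min (a b : R) : `|a - b| = a + b - 2 * Num.min a b.
Proof.
case: (leP a b) => ab.
- by rewrite (ler0_norm (_ : a - b <= 0)); lra.
- by rewrite (ger0_norm (_ : 0 <= a - b)); lra.
Qed.

Lemma stochastic_rows_dist A i k : stochastic A ->
  \sum_(j < n) `|A i j - A k j| <= 2 * (1 - dobrushin A).
Proof.
move=> [_ rowA].
under eq_bigr do rewrite dist_min.
rewrite sumrB big_split /= !rowA -mulr_sumr.
by have := dobrushin_le_overlap A i k; lra.
Qed.

Lemma prob_vec_mulmx mu A : prob_vec mu -> stochastic A -> prob_vec (mu *m A).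
Proof.
move=> [mu_ge0 mu_sum] [A_ge0 rowA]; split=> [j|].
  by rewrite mxE; apply: sumr_ge0 => i _; exact: mulr_ge0.
under eq_bigr do rewrite mxE.
rewrite exchange_big /= -mu_sum; apply: eq_bigr => i _.
by rewrite -mulr_sumr rowA mulr1.
Qed.

Lemma norm1_triangle u w : norm1 (u + w) <= norm1 u + norm1 w.
Proof.
rewrite /norm1 -big_split /=; apply: ler_sum => j _.
by rewrite mxE; exact: ler_normD.
Qed.

Lemma norm1_prob_diff u w : prob_vec u -> prob_vec w -> norm1 (u - w) <= 2.
Proof.
move=> [u_ge0 u_sum] [w_ge0 w_sum].
have -> : 2 = \sum_(j < n) (u 0 j + w 0 j) :> R by rewrite big_split /= u_sum w_sum.
apply: ler_sum => j _; rewrite !mxE.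
by apply: le_trans (ler_normB _ _) _; rewrite !ger0_norm.
Qed.

Lemma sum_prob_diff u w : prob_vec u -> prob_vec w ->
  \sum_(j < n) (u - w) 0 j = 0.
Proof.
move=> [_ u_sum] [_ w_sum].
by under eq_bigr do rewrite !mxE; rewrite sumrB u_sum w_sum subrr.
Qed.

Lemma norm1_prob_mulmx_le mu D c : prob_vec mu -> 0 <= c ->
  (forall i j, `|D i j| <= c / n%:R) -> norm1 (mu *m D) <= c.
Proof.
move=> [mu_ge0 mu_sum] c_ge0 D_le.
have col_le j : `|(mu *m D) 0 j| <= c / n%:R.
  rewrite mxE; apply: le_trans (ler_norm_sum _ _ _) _.
  apply: le_trans (_ : \sum_i mu 0 i * (c / n%:R) <= _).
    apply: ler_sum => i _; rewrite normrM ger0_norm //.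
    exact: ler_wpM2l.
  by rewrite -mulr_suml mu_sum mul1r.
apply: le_trans (_ : \sum_(j < n) c / n%:R <= _); first exact: ler_sum.
rewrite sumr_const card_ord.
have [-> | n_gt0] := posnP n; first by rewrite mulr0n.
by rewrite -[X in X <= _]mulr_natl mulrC divfK // pnatr_eq0 -lt0n.
Qed.

Definition pos_part (x : R) : R := Num.max x 0.
Definition neg_part (x : R) : R := Num.max (- x) 0.

Lemma pos_part_ge0 x : 0 <= pos_part x.
Proof. by rewrite /pos_part le_max lexx orbT. Qed.

Lemma neg_part_ge0 x : 0 <= neg_part x.
Proof. by rewrite /neg_part le_max lexx orbT. Qed.

Lemma pos_sub_neg x : pos_part x - neg_part x = x.
Proof. by rewrite /pos_part /neg_part; case: (leP x 0); case: (leP (- x) 0); lra. Qed.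

Lemma pos_add_neg x : pos_part x + neg_part x = `|x|.
Proof.
rewrite /pos_part /neg_part; case: (leP x 0) => x0.
- by rewrite (ler0_norm x0); case: (leP (- x) 0); lra.
- by rewrite (gtr0_norm x0); case: (leP (- x) 0); lra.
Qed.

Lemma coupling_identity A (p q : 'I_n -> R) j : \sum_k q k = \sum_i p i ->
  (\sum_i p i) * \sum_i (p i - q i) * A i j =
  \sum_i \sum_k p i * q k * (A i j - A k j).
Proof.
move=> same_mass; set s := \sum_i p i in same_mass *; set T := \sum_k q k * A k j.
have row_i i : \sum_k p i * q k * (A i j - A k j) = p i * A i j * s - p i * T.
  by rewrite /T -same_mass !mulr_sumr -sumrB; apply: eq_bigr => k _; ring.
rewrite (eq_bigr _ (fun i _ => row_i i)) sumrB -!mulr_suml.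
under eq_bigr do rewrite mulrBl.
by rewrite sumrB -/T -/s; ring.
Qed.

Lemma dobrushin_contraction A v : stochastic A -> \sum_(j < n) v 0 j = 0 ->
  norm1 (v *m A) <= (1 - dobrushin A) * norm1 v.
Proof.
move=> stoA v_sum.
pose p i := pos_part (v 0 i); pose q i := neg_part (v 0 i).
have v_pq i : v 0 i = p i - q i by rewrite pos_sub_neg.
set s := \sum_i p i.
have same_mass : \sum_i q i = s.
  apply/eqP; rewrite eq_sym -subr_eq0 -sumrB; apply/eqP; rewrite -[RHS]v_sum.
  by apply: eq_bigr => i _; rewrite v_pq.
have norm_v : norm1 v = s + s.
  by rewrite /norm1 -{2}same_mass -big_split; apply: eq_bigr => i _; rewrite -pos_add_neg.
have s_ge0 : 0 <= s by apply: sumr_ge0 => i _; exact: pos_part_ge0.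
have coupled : s * norm1 (v *m A) <= s * s * (2 * (1 - dobrushin A)).
  rewrite /norm1 mulr_sumr.
  apply: le_trans (_ : \sum_j \sum_i \sum_k p i * q k * `|A i j - A k j| <= _).
    apply: ler_sum => j _; rewrite -(ger0_norm s_ge0) -normrM mxE.
    under eq_bigr do rewrite v_pq.
    rewrite coupling_identity // -/s.
    apply: le_trans (ler_norm_sum _ _ _) _; apply: ler_sum => i _.
    apply: le_trans (ler_norm_sum _ _ _) _; apply: ler_sum => k _.
    by rewrite normrM ger0_norm // mulr_ge0 ?pos_part_ge0 ?neg_part_ge0.
  rewrite exchange_big /=.
  apply: le_trans (_ : \sum_i \sum_k p i * q k * (2 * (1 - dobrushin A)) <= _).
    apply: ler_sum => i _; rewrite exchange_big /=; apply: ler_sum => k _.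
    rewrite -mulr_sumr; apply: ler_wpM2l; last exact: stochastic_rows_dist.
    by rewrite mulr_ge0 ?pos_part_ge0 ?neg_part_ge0.
  under eq_bigr do rewrite -mulr_suml -mulr_sumr same_mass.
  by rewrite -!mulr_suml.
have [s0 | s_gt0] := eqVneq s 0.
  have v0 : v = 0.
    apply/rowP => i; rewrite mxE v_pq.
    have p0 := psumr_eq0P (fun i _ => pos_part_ge0 (v 0 i)) s0.
    have q0 := psumr_eq0P (fun i _ => neg_part_ge0 (v 0 i)) (etrans same_mass s0).
    by rewrite /p /q p0 // q0 // subrr.
  by rewrite v0 mul0mx /norm1 big1 ?mulr0 // => j _; rewrite mxE normr0.
have s_pos : 0 < s by rewrite lt_def s_gt0 s_ge0.
rewrite norm_v -(ler_pM2l s_pos); apply: le_trans coupled _.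
by rewrite le_eqVlt; apply/orP; left; apply/eqP; ring.
Qed.

End Dobrushin.

Section Recursion.
Context {R : realFieldType}.

Lemma affine_recursion_bound (a b : R) (e : nat -> R) : 0 <= a ->
  (forall k, e k.+1 <= a * e k + (1 - a) * b) ->
  forall k, e k <= a ^+ k * (e 0 - b) + b.
Proof.
move=> a_ge0 step; elim=> [|k IH]; first by rewrite expr0 mul1r; lra.
apply: le_trans (step k) _.
have := ler_wpM2l a_ge0 IH; rewrite exprS; lra.
Qed.

Lemma bernoulli_ineq (x : R) (N : nat) : 0 <= x -> 1 + N%:R * x <= (1 + x) ^+ N.
Proof.
move=> x_ge0; elim: N => [|N IH]; first by rewrite expr0 mul0r addr0.
rewrite exprS -natr1.
have : 0 <= N%:R * x by exact: mulr_ge0.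
nra.
Qed.

End Recursion.

Lemma expr_eventually_small {R : archiRealFieldType} (a d : R) :
  0 <= a -> a < 1 -> 0 < d -> exists N : nat, forall k, (N <= k)%N -> a ^+ k <= d.
Proof.
move=> a_ge0 a_lt1 d_gt0.
set s := 1 - a.
have s_gt0 : 0 < s by rewrite /s; lra.
have decay N : a ^+ N * (N%:R * s) <= 1.
  apply: le_trans (_ : a ^+ N * (1 + s) ^+ N <= 1).
    by apply: ler_wpM2l; [exact: exprn_ge0 | have := @bernoulli_ineq _ s N (ltW s_gt0); lra].
  by rewrite -exprMn; apply: exprn_ile1; rewrite /s; nra.
set x := (s * d)^-1.
have x_ge0 : 0 <= x by rewrite invr_ge0; exact/ltW/mulr_gt0.
set N := Num.Def.archi_bound x.
exists N => k le_Nk.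
have N_large : 1 < N%:R * s * d.
  have := archi_boundP x_ge0; rewrite -/N /x -mulrA => lt_xN.
  by rewrite -(ltr_pM2r (mulr_gt0 s_gt0 d_gt0)) mulVf ?gt_eqF ?mulr_gt0 in lt_xN.
apply: le_trans (ler_wiXn2l a_ge0 (ltW a_lt1) le_Nk) _.
have := decay N; have := exprn_ge0 N a_ge0; nra.
Qed.

Theorem lemma4 (R : archiRealFieldType) (n : nat) (A : 'M[R]_n)
  (As : nat -> 'M[R]_n) (mustar : 'rV[R]_n) (eps : R) :
  stochastic A ->
  0 < dobrushin A ->
  (forall k, stochastic (As k)) ->
  prob_vec mustar -> mustar = mustar *m A ->
  0 < eps -> eps < 1 ->
  (forall k i j, `|As k i j - A i j| <= dobrushin A * eps / (2 * n%:R)) ->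
  forall mu0 : 'rV[R]_n, prob_vec mu0 ->
  (* limsup_{k -> oo} ||mu0 A_0 ... A_k - mustar||_1 <= eps *)
  forall delta : R, 0 < delta ->
    exists N : nat, forall k : nat, (N <= k)%N ->
      norm1 (traj mu0 As k - mustar) <= eps + delta.
Proof.
move=> stoA sg_gt0 stoAs prob_star fixed eps_gt0 _ close mu0 prob_mu0 delta delta_gt0.
set sg := dobrushin A in sg_gt0 close *.
have sg_le1 : sg <= 1 by exact: dobrushin_le1.
have prob_traj k : prob_vec (traj mu0 As k).
  by elim: k => [|k IH] /=; exact: prob_vec_mulmx.
have error_split k : traj mu0 As k.+1 - mustar =
    (traj mu0 As k - mustar) *m A + traj mu0 As k *m (As k.+1 - A).
  by rewrite /= mulmxBl mulmxBr -fixed [RHS]addrC addrA subrK.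
have step k : norm1 (traj mu0 As k.+1 - mustar) <=
    (1 - sg) * norm1 (traj mu0 As k - mustar) + (1 - (1 - sg)) * (eps / 2).
  rewrite error_split (_ : (1 - (1 - sg)) * (eps / 2) = sg * eps / 2); last by ring.
  apply: le_trans (norm1_triangle _ _) _; apply: lerD.
    exact/dobrushin_contraction/sum_prob_diff.
  apply: norm1_prob_mulmx_le => // [|i j]; first by rewrite divr_ge0 ?mulr_ge0 ?ltW.
  by rewrite !mxE; apply: le_trans (close _ _ _) _; rewrite invfM mulrA.
have a_ge0 : 0 <= 1 - sg by lra.
have bound := @affine_recursion_bound R (1 - sg) (eps / 2)
  (fun k => norm1 (traj mu0 As k - mustar)) a_ge0 step.
have a_lt1 : 1 - sg < 1 by lra.
have half_delta_gt0 : 0 < delta / 2 by rewrite divr_gt0.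
have [N small] := expr_eventually_small _ _ a_ge0 a_lt1 half_delta_gt0.
exists N => k le_Nk.
have error0_le2 := norm1_prob_diff _ _ (prob_traj 0%N) prob_star.
have /= := bound k; have := small k le_Nk; have := exprn_ge0 k a_ge0.
nra.
Qed.
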